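(* Let $\Gamma=(V_\Gamma,E_\Gamma)$ be a simple triangular grid graph, let $u,v\in V_\Gamma$, and let $\mathcal U_{uv}\subseteq V_\Gamma$ be the set of all nodes that lie on at least one shortest $uv$-path in $\Gamma$. Then $\mathcal U_{uv}$ is geodesically convex in $\Gamma$: for all $x,y\in\mathcal U_{uv}$, every shortest $xy$-path in $\Gamma$ consists entirely of nodes of $\mathcal U_{uv}$.
   Context: $G_\Delta=(V_\Delta,E_\Delta)$ is the infinite regular triangular grid graph. A triangular grid graph is the subgraph $\Gamma$ of $G_\Delta$ induced by a finite node set $V_\Gamma\subseteq V_\Delta$ such that $\Gamma$ is connected. The holes of $\Gamma$ are the connected components of the subgraph of $G_\Delta$ induced by $V_\Delta\setminus V_\Gamma$; exactly one is unbounded (the outer hole), the others are inner holes. $\Gamma$ is simple if it has no inner holes. Paths are sequences of nodes with consecutive nodes adjacent in $\Gamma$; the length of a path is its number of edges, and $d_\Gamma$ denotes the shortest-path distance in $\Gamma$. *)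

From Stdlib Require Import ZArith List.
Import ListNotations.
Open Scope Z_scope.

(* Nodes of the infinite regular triangular grid G_Delta, in axial
   coordinates: node (a,b) is adjacent to its six neighbours
   (a+-1,b), (a,b+-1), (a+1,b-1), (a-1,b+1). *)
Definition node := (Z * Z)%type.

Definition tri_adj (p q : node) : Prop :=
  let dx := fst q - fst p in
  let dy := snd q - snd p in
  (dx = 1 /\ dy = 0) \/ (dx = -1 /\ dy = 0) \/
  (dx = 0 /\ dy = 1) \/ (dx = 0 /\ dy = -1) \/
  (dx = 1 /\ dy = -1) \/ (dx = -1 /\ dy = 1).

(* gpath S x l z : x :: l is a path from x to z in the subgraph of G_Delta
   induced by the node set S; its length (number of edges) is length l. *)
Inductive gpath (S : node -> Prop) : node -> list node -> node -> Prop :=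
| gp_nil x : S x -> gpath S x [] x
| gp_cons x y l z : S x -> tri_adj x y -> gpath S y l z -> gpath S x (y :: l) z.

Definition shortest_path (S : node -> Prop) (x : node) (l : list node) (z : node) : Prop :=
  gpath S x l z /\ forall l', gpath S x l' z -> (length l <= length l')%nat.

Definition connected_set (S : node -> Prop) : Prop :=
  forall x y, S x -> S y -> exists l, gpath S x l y.

Definition tri_grid_graph (vs : list node) : Prop :=
  connected_set (fun x => In x vs).

(* Simple: no inner holes, i.e. the complement V_Delta \ V_Gamma induces a
   connected subgraph of G_Delta (it consists of the outer hole only). *)
Definition simple_grid (vs : list node) : Prop :=
  connected_set (fun x => ~ In x vs).

Definition on_shortest (vs : list node) (u v : node) (x : node) : Prop :=
  exists l, shortest_path (fun z => In z vs) u l v /\ In x (u :: l).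

(* Every edge of the triangular grid crosses exactly two of the three families of lines
   running halfway between parallel rows of nodes. On such a line the maximal runs of
   consecutive edges of Γ are the cuts of Γ, so a walk of length n crosses cuts 2n times
   in total. A shortest path crosses each cut at most once, since between two crossings
   it could be short-cut along the cut. As Γ has no inner holes, the nodes outside Γ at
   the two ends of a cut are joined outside Γ, so by a winding-number count every closed
   walk crosses every cut an even number of times. Hence the parity of the number of
   crossings of a cut depends only on the endpoints of a path, and a path is shortest iff
   it crosses no cut twice. For z on a shortest xy-path with x, y in U_uv, a parity count
   shows that shortest uz- and zv-paths together cross no cut twice, so they form a
   shortest uv-path through z. *)

From Stdlib Require Import ZArith List Lia Classical ClassicalEpsilon.
Import ListNotations.
Open Scope Z_scope.

Lemma last_cons {A : Type} (x y : A) l : last (y :: l) x = last l y.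
Proof.
  revert x y; induction l as [|z l IH]; intros x y; [reflexivity|].
  change (last (z :: l) x = last (z :: l) y). rewrite (IH x z), (IH y z); reflexivity.
Qed.

Lemma gpath_mono (P Q : node -> Prop) x l y :
  (forall z, P z -> Q z) -> gpath P x l y -> gpath Q x l y.
Proof. intros HPQ G; induction G; constructor; auto. Qed.

Lemma gpath_map (h : node -> node) (P Q : node -> Prop) x l y :
  (forall p q, tri_adj p q -> tri_adj (h p) (h q)) ->
  (forall z, P z -> Q (h z)) -> gpath P x l y -> gpath Q (h x) (map h l) (h y).
Proof. intros Hadj HPQ G; induction G; constructor; auto. Qed.

Lemma gpath_app P x l1 m l2 y :
  gpath P x l1 m -> gpath P m l2 y -> gpath P x (l1 ++ l2) y.
Proof. intros G; induction G; intros; simpl; auto. constructor; auto. Qed.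

Lemma gpath_ends P x l y : gpath P x l y -> P x /\ P y.
Proof. intros G; induction G; tauto. Qed.

Lemma gpath_last P x l y : gpath P x l y -> last l x = y.
Proof. intros G; induction G; auto. rewrite last_cons; auto. Qed.

Lemma gpath_end_in P x l y : gpath P x l y -> In y (x :: l).
Proof. intros G; induction G; simpl in *; tauto. Qed.

Lemma gpath_split P x l y z :
  gpath P x l y -> In z (x :: l) ->
  exists l1 l2, l = l1 ++ l2 /\ gpath P x l1 z /\ gpath P z l2 y.
Proof.
  intros G; induction G as [x Hx|x y l w Hx Hxy G IH]; intros Hz.
  - destruct Hz as [<-|[]]. exists [], []. repeat split; constructor; auto.
  - destruct Hz as [<-|Hz].
    + exists [], (y :: l). repeat split; [constructor; auto|constructor; auto].
    + destruct (IH Hz) as (l1 & l2 & -> & G1 & G2).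
      exists (y :: l1), l2. repeat split; auto. constructor; auto.
Qed.

Lemma shortest_path_exists P x y :
  (exists l, gpath P x l y) -> exists l, shortest_path P x l y.
Proof.
  intros [l G].
  assert (Hn : forall n l, (length l <= n)%nat -> gpath P x l y ->
                 exists l, shortest_path P x l y).
  { induction n as [|n IH]; intros l0 Hl0 G0.
    - exists l0; split; auto. intros; lia.
    - destruct (classic (forall l', gpath P x l' y -> (length l0 <= length l')%nat))
        as [Hmin|Hnot]; [exists l0; split; auto|].
      apply not_all_ex_not in Hnot as [l' Hl'].
      apply imply_to_and in Hl' as [G' Hlt].
      apply (IH l'); auto. lia. }
  exact (Hn _ l (le_n _) G).
Qed.

Lemma shortest_path_ext (P Q : node -> Prop) x l y :
  (forall z, P z <-> Q z) -> shortest_path P x l y -> shortest_path Q x l y.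
Proof.
  intros HPQ [G Hmin]; split.
  - apply (gpath_mono P); firstorder.
  - intros l' G'. apply Hmin. apply (gpath_mono Q); firstorder.
Qed.

Lemma shortest_path_tail P x y l z :
  shortest_path P x (y :: l) z -> shortest_path P y l z.
Proof.
  intros [G Hmin]. inversion G as [|? ? ? ? Hx Hxy Gy]; subst. split; auto.
  intros l' G'. specialize (Hmin (y :: l')). simpl in Hmin.
  enough (S (length l) <= S (length l'))%nat by lia. apply Hmin. constructor; auto.
Qed.

Section CutArgument.

Variable P : node -> Prop.
Hypothesis P_connected : connected_set P.
Variable C : Type.
Hypothesis C_dec : forall a b : C, {a = b} + {a <> b}.
(* [cuts x l] lists, with multiplicity, the cuts crossed by the walk x :: l. *)
Variable cuts : node -> list node -> list C.
Variable k : nat.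
Hypothesis k_pos : (0 < k)%nat.

Let mult x l g := count_occ C_dec (cuts x l) g.

Hypothesis mult_app : forall x l1 m l2 g,
  gpath P x l1 m -> mult x (l1 ++ l2) g = (mult x l1 g + mult m l2 g)%nat.
Hypothesis cuts_length : forall x l y,
  gpath P x l y -> length (cuts x l) = (k * length l)%nat.
Hypothesis shortest_mult_le1 : forall x l y g,
  shortest_path P x l y -> (mult x l g <= 1)%nat.
Hypothesis closed_walk_mult_even : forall x l g,
  gpath P x l x -> Nat.Even (mult x l g).

Lemma mult_parity_path_independent a A B b g :
  gpath P a A b -> gpath P a B b -> Nat.Even (mult a A g + mult a B g).
Proof.
  intros GA GB. destruct (gpath_ends _ _ _ _ GA) as [Ha Hb].
  destruct (P_connected b a Hb Ha) as [Cb Gb].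
  destruct (closed_walk_mult_even a (A ++ Cb) g (gpath_app _ _ _ _ _ _ GA Gb)) as [n1 E1].
  destruct (closed_walk_mult_even a (B ++ Cb) g (gpath_app _ _ _ _ _ _ GB Gb)) as [n2 E2].
  rewrite (mult_app _ _ _ _ _ GA) in E1. rewrite (mult_app _ _ _ _ _ GB) in E2.
  exists (n1 + n2 - mult b Cb g)%nat. lia.
Qed.

Lemma shortest_path_of_mult_le1 x l y :
  gpath P x l y -> (forall g, (mult x l g <= 1)%nat) -> shortest_path P x l y.
Proof.
  intros G Hle1. split; auto. intros R GR.
  assert (Hnodup : NoDup (cuts x l)) by (apply (NoDup_count_occ C_dec); exact Hle1).
  assert (Hincl : incl (cuts x l) (cuts x R)).
  { intros g Hg. apply (count_occ_In C_dec) in Hg. apply (count_occ_In C_dec).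
    destruct (mult_parity_path_independent x l R y g G GR) as [n Hn].
    specialize (Hle1 g). unfold mult in *. lia. }
  pose proof (NoDup_incl_length Hnodup Hincl) as Hlen.
  rewrite (cuts_length _ _ _ G), (cuts_length _ _ _ GR) in Hlen. nia.
Qed.

Lemma shortest_interval_convex u v x y A B l z :
  shortest_path P u A v -> In x (u :: A) ->
  shortest_path P u B v -> In y (u :: B) ->
  shortest_path P x l y -> In z (x :: l) ->
  exists L, shortest_path P u L v /\ In z (u :: L).
Proof.
  intros SA HxA SB HyB Sl Hz.
  destruct (gpath_split _ _ _ _ _ (proj1 SA) HxA) as (A1 & A2 & -> & GA1 & GA2).
  destruct (gpath_split _ _ _ _ _ (proj1 SB) HyB) as (B1 & B2 & -> & GB1 & GB2).
  destruct (gpath_split _ _ _ _ _ (proj1 Sl) Hz) as (l1 & l2 & -> & Gl1 & Gl2).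
  destruct (gpath_ends _ _ _ _ GA1) as [Hu _].
  destruct (gpath_ends _ _ _ _ GB2) as [_ Hv].
  destruct (gpath_ends _ _ _ _ Gl1) as [_ Hzin].
  destruct (shortest_path_exists _ u z (P_connected u z Hu Hzin)) as [P1 SP1].
  destruct (shortest_path_exists _ z v (P_connected z v Hzin Hv)) as [P2 SP2].
  pose proof (proj1 SP1) as GP1. pose proof (proj1 SP2) as GP2.
  pose proof (gpath_app _ _ _ _ _ _ GP1 GP2) as GP.
  exists (P1 ++ P2). split.
  2: { destruct (gpath_end_in _ _ _ _ GP1) as [<-|H]; [left; auto|].
       right. apply in_or_app; auto. }
  apply shortest_path_of_mult_le1; auto. intros g.
  rewrite (mult_app _ _ _ _ _ GP1).
  pose proof (shortest_mult_le1 _ _ _ g SP1). pose proof (shortest_mult_le1 _ _ _ g SP2).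
  pose proof (shortest_mult_le1 _ _ _ g SA) as HA.
  pose proof (shortest_mult_le1 _ _ _ g SB) as HB.
  pose proof (shortest_mult_le1 _ _ _ g Sl) as Hl.
  rewrite (mult_app _ _ _ _ _ GA1) in HA. rewrite (mult_app _ _ _ _ _ GB1) in HB.
  rewrite (mult_app _ _ _ _ _ Gl1) in Hl.
  (* If both halves of P1 ++ P2 crossed g, parity would force the x-z and the z-y part
     of the shortest path l to cross g as well. *)
  destruct (mult_parity_path_independent u (P1 ++ P2) (A1 ++ A2) v g GP (proj1 SA)) as [n1 K1].
  destruct (mult_parity_path_independent u (P1 ++ P2) (B1 ++ B2) v g GP (proj1 SB)) as [n2 K2].
  destruct (mult_parity_path_independent u (A1 ++ l1) P1 z g
              (gpath_app _ _ _ _ _ _ GA1 Gl1) GP1) as [n3 K3].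
  destruct (mult_parity_path_independent u (P1 ++ l2) B1 y g
              (gpath_app _ _ _ _ _ _ GP1 Gl2) GB1) as [n4 K4].
  rewrite (mult_app _ _ _ _ _ GP1), (mult_app _ _ _ _ _ GA1) in K1.
  rewrite (mult_app _ _ _ _ _ GP1), (mult_app _ _ _ _ _ GB1) in K2.
  rewrite (mult_app _ _ _ _ _ GA1) in K3. rewrite (mult_app _ _ _ _ _ GP1) in K4.
  lia.
Qed.

End CutArgument.

Ltac destruct_adj H :=
  unfold tri_adj in H; cbn [fst snd] in H;
  repeat match type of H with _ \/ _ => destruct H as [H|H] end;
  destruct H.

Ltac destruct_Zcmp :=
  repeat match goal with
  | |- context [Z.eqb ?a ?b] => destruct (Z.eqb_spec a b)
  | |- context [Z.leb ?a ?b] => destruct (Z.leb_spec a b)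
  | |- context [Z.ltb ?a ?b] => destruct (Z.ltb_spec a b)
  | H : context [Z.eqb ?a ?b] |- _ => destruct (Z.eqb_spec a b)
  end; cbv beta iota delta [andb] in *.

Definition tri_dist (p q : node) : Z :=
  let da := fst q - fst p in let db := snd q - snd p in
  Z.max (Z.abs da) (Z.max (Z.abs db) (Z.abs (da + db))).

Lemma tri_dist_adj p q y : tri_adj p q -> tri_dist p y <= 1 + tri_dist q y.
Proof. destruct p, q, y; intros H; unfold tri_dist; cbn [fst snd]; destruct_adj H; lia. Qed.

Lemma tri_dist_le_length P x l y : gpath P x l y -> tri_dist x y <= Z.of_nat (length l).
Proof.
  intros G; induction G as [x|x y l z _ Hxy _ IH]; [unfold tri_dist; lia|].
  pose proof (tri_dist_adj x y z Hxy). cbn [length]. lia.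
Qed.

(* Strip b is the band between rows b and b + 1. The edges crossing it are indexed by
   their position s, the sum of the first coordinates of their two endpoints: edge s
   joins the lower node ((s + 1) / 2, b) to the upper node (s / 2, b + 1), and edges
   s and s + 1 are two sides of a common triangle. *)
Definition strip_crossing (p q : node) : option (Z * Z) :=
  if snd q =? snd p + 1 then Some (snd p, fst p + fst q)
  else if snd p =? snd q + 1 then Some (snd q, fst p + fst q) else None.

Definition lower_end (b s : Z) (p : node) := snd p = b /\ 2 * fst p - 1 <= s <= 2 * fst p.
Definition upper_end (b s : Z) (p : node) := snd p = b + 1 /\ 2 * fst p <= s <= 2 * fst p + 1.
Definition strip_end b s p := lower_end b s p \/ upper_end b s p.

Definition strip_edge_in (f : node -> bool) (b s : Z) : bool :=
  f ((s + 1) / 2, b) && f (s / 2, b + 1).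

Lemma strip_crossing_spec p q b s : strip_crossing p q = Some (b, s) ->
  ((snd q = snd p + 1 /\ b = snd p) \/ (snd p = snd q + 1 /\ b = snd q)) /\ s = fst p + fst q.
Proof. unfold strip_crossing. destruct_Zcmp; intros H; inversion H; subst; lia. Qed.

Lemma strip_crossing_ends p q b s : tri_adj p q -> strip_crossing p q = Some (b, s) ->
  (lower_end b s p /\ upper_end b s q) \/ (upper_end b s p /\ lower_end b s q).
Proof.
  destruct p as [p1 p2], q as [q1 q2]; intros Hpq Hc.
  apply strip_crossing_spec in Hc. unfold lower_end, upper_end; cbn [fst snd] in *.
  destruct_adj Hpq; lia.
Qed.

Lemma lower_end_eq b s p : lower_end b s p -> p = ((s + 1) / 2, b).
Proof.
  destruct p; unfold lower_end; cbn [fst snd]; intros [-> H].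
  f_equal. Z.div_mod_to_equations. lia.
Qed.

Lemma upper_end_eq b s p : upper_end b s p -> p = (s / 2, b + 1).
Proof.
  destruct p; unfold upper_end; cbn [fst snd]; intros [-> H].
  f_equal. Z.div_mod_to_equations. lia.
Qed.

Lemma strip_edge_in_crossing f p q b s : f p = true -> f q = true -> tri_adj p q ->
  strip_crossing p q = Some (b, s) -> strip_edge_in f b s = true.
Proof.
  intros Hp Hq Hpq Hc. unfold strip_edge_in.
  destruct (strip_crossing_ends _ _ _ _ Hpq Hc) as [[H1 H2]|[H1 H2]].
  - rewrite <- (lower_end_eq _ _ _ H1), <- (upper_end_eq _ _ _ H2), Hp, Hq; auto.
  - rewrite <- (lower_end_eq _ _ _ H2), <- (upper_end_eq _ _ _ H1), Hp, Hq; auto.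
Qed.

Lemma strip_edge_out f b s : strip_edge_in f b s = false ->
  exists m, f m = false /\ strip_end b s m.
Proof.
  unfold strip_edge_in, strip_end, lower_end, upper_end. intros H.
  apply Bool.andb_false_iff in H as [H|H]; eexists; split; try exact H; cbn [fst snd];
  Z.div_mod_to_equations; lia.
Qed.

Lemma row_path (f : node -> bool) r n : forall a a', Z.abs (a' - a) = Z.of_nat n ->
  (forall c, Z.min a a' <= c <= Z.max a a' -> f (c, r) = true) ->
  exists L, gpath (fun z => f z = true) (a, r) L (a', r) /\ length L = n.
Proof.
  induction n as [|n IH]; intros a a' Hn Hrow.
  - assert (a = a') as <- by lia. exists []. split; auto. constructor. apply Hrow; lia.
  - set (a1 := if Z_lt_ge_dec a a' then a + 1 else a - 1).
    destruct (IH a1 a') as (L & G & HL); try (unfold a1; destruct Z_lt_ge_dec; lia).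
    { intros c Hc. apply Hrow. unfold a1 in Hc; destruct Z_lt_ge_dec; lia. }
    exists ((a1, r) :: L). split; [|simpl; lia]. constructor; auto.
    + apply Hrow; lia.
    + unfold tri_adj, a1; cbn [fst snd]. destruct Z_lt_ge_dec; lia.
Qed.

Lemma strip_run_rows f b s s' :
  (forall u, Z.min s s' <= u <= Z.max s s' -> strip_edge_in f b u = true) ->
  (forall c, Z.min s s' <= 2 * c -> 2 * c - 1 <= Z.max s s' -> f (c, b) = true) /\
  (forall c, Z.min s s' <= 2 * c + 1 -> 2 * c <= Z.max s s' -> f (c, b + 1) = true).
Proof.
  intros Hrun; split; intros c H1 H2.
  - pose proof (Hrun (Z.max (Z.min s s') (2 * c - 1)) ltac:(lia)) as H.
    apply andb_prop in H as [H _].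
    replace ((Z.max (Z.min s s') (2 * c - 1) + 1) / 2) with c in H; auto.
    Z.div_mod_to_equations; lia.
  - pose proof (Hrun (Z.max (Z.min s s') (2 * c)) ltac:(lia)) as H.
    apply andb_prop in H as [_ H].
    replace (Z.max (Z.min s s') (2 * c) / 2) with c in H; auto.
    Z.div_mod_to_equations; lia.
Qed.

Lemma strip_run_path f b s s' p q :
  (forall u, Z.min s s' <= u <= Z.max s s' -> strip_edge_in f b u = true) ->
  strip_end b s p -> strip_end b s' q ->
  exists L, gpath (fun z => f z = true) p L q /\ Z.of_nat (length L) <= tri_dist p q.
Proof.
  intros Hrun Hp Hq. destruct (strip_run_rows f b s s' Hrun) as [Hlow Hup].
  destruct p as [p1 p2], q as [q1 q2].
  unfold strip_end, lower_end, upper_end, tri_dist in *; cbn [fst snd] in *.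
  destruct Hp as [[-> Hp]|[-> Hp]], Hq as [[-> Hq]|[-> Hq]].
  - destruct (row_path f b (Z.to_nat (Z.abs (q1 - p1))) p1 q1) as (L & G & HL);
      [lia|intros c Hc; apply Hlow; lia|].
    exists L; split; auto. lia.
  - set (w := if Z_le_gt_dec p1 q1 then p1 else p1 - 1).
    destruct (row_path f (b + 1) (Z.to_nat (Z.abs (q1 - w))) w q1) as (L & G & HL);
      [lia|intros c Hc; apply Hup; unfold w in *; destruct Z_le_gt_dec; lia|].
    exists ((w, b + 1) :: L); split; [|simpl; unfold w; destruct Z_le_gt_dec; lia].
    constructor; auto; [apply Hlow; lia|unfold tri_adj, w; cbn; destruct Z_le_gt_dec; lia].
  - set (w := if Z_le_gt_dec q1 p1 then p1 else p1 + 1).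
    destruct (row_path f b (Z.to_nat (Z.abs (q1 - w))) w q1) as (L & G & HL);
      [lia|intros c Hc; apply Hlow; unfold w in *; destruct Z_le_gt_dec; lia|].
    exists ((w, b) :: L); split; [|simpl; unfold w; destruct Z_le_gt_dec; lia].
    constructor; auto; [apply Hup; lia|unfold tri_adj, w; cbn; destruct Z_le_gt_dec; lia].
  - destruct (row_path f (b + 1) (Z.to_nat (Z.abs (q1 - p1))) p1 q1) as (L & G & HL);
      [lia|intros c Hc; apply Hup; lia|].
    exists L; split; auto. lia.
Qed.

Definition finite_set (f : node -> bool) := exists vs, forall z, f z = true -> In z vs.

Lemma list_coord_bound (vs : list node) :
  exists B, forall z, In z vs -> Z.abs (fst z) <= B /\ Z.abs (snd z) <= B.
Proof.
  induction vs as [|p vs [B HB]]; [exists 0; intros z []|].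
  exists (Z.max (Z.abs (fst p) + Z.abs (snd p)) B). intros z [<-|Hz]; [lia|].
  specialize (HB z Hz). lia.
Qed.

Lemma strip_edge_far f : finite_set f ->
  exists M, forall b r, M <= Z.abs r -> strip_edge_in f b r = false.
Proof.
  intros [vs Hvs]. destruct (list_coord_bound vs) as [B HB].
  exists (2 * B + 3). intros b r Hr. unfold strip_edge_in.
  destruct (f ((r + 1) / 2, b)) eqn:E; auto.
  apply Hvs, HB in E. cbn [fst snd] in E. exfalso. Z.div_mod_to_equations. lia.
Qed.

Lemma false_gap_below (e : Z -> bool) M : (forall r, M <= Z.abs r -> e r = false) ->
  forall s, exists r, r < s /\ e r = false /\ forall u, r < u < s -> e u = true.
Proof.
  intros Hfar.
  assert (Hn : forall n s, e (s - 1 - Z.of_nat n) = false ->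
                 exists r, r < s /\ e r = false /\ forall u, r < u < s -> e u = true).
  { induction n as [|n IH]; intros s H.
    - exists (s - 1). rewrite Z.sub_0_r in H. repeat split; auto; lia.
    - destruct (e (s - 1)) eqn:E; [|exists (s - 1); repeat split; auto; lia].
      destruct (IH (s - 1)) as (r & H1 & H2 & H3); [rewrite <- H; f_equal; lia|].
      exists r. repeat split; auto; try lia. intros u Hu.
      destruct (Z.eq_dec u (s - 1)) as [->|]; auto. apply H3; lia. }
  intros s. apply (Hn (Z.to_nat (Z.abs s + M))), Hfar. lia.
Qed.

Lemma false_gap_above (e : Z -> bool) M : (forall r, M <= Z.abs r -> e r = false) ->
  forall s, exists r, s < r /\ e r = false /\ forall u, s < u < r -> e u = true.
Proof.
  intros Hfar s.
  destruct (false_gap_below (fun u => e (- u)) M) with (s := - s) as (r & H1 & H2 & H3).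
  { intros r Hr. apply Hfar. lia. }
  exists (- r). repeat split; [lia|exact H2|]. intros u Hu.
  rewrite <- (Z.opp_involutive u). apply H3. lia.
Qed.

(* The edges crossing strip b inside the set split into maximal runs of consecutive
   positions, the cuts of strip b; the cut containing edge s is labelled (b, r) where
   r is the position of the last edge before s that is not inside the set. *)
Definition cut_left f b s r :=
  r < s /\ strip_edge_in f b r = false /\ forall u, r < u < s -> strip_edge_in f b u = true.

Definition cut_start f b s : Z := epsilon (inhabits 0) (cut_left f b s).

Lemma cut_start_spec f b s : finite_set f -> cut_left f b s (cut_start f b s).
Proof.
  intros Hfin. unfold cut_start. apply epsilon_spec. destruct (strip_edge_far f Hfin) as [M HM].
  exact (false_gap_below (strip_edge_in f b) M (HM b) s).
Qed.

Definition strip_cut f b r r' :=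
  r < r' /\ strip_edge_in f b r = false /\ strip_edge_in f b r' = false /\
  forall u, r < u < r' -> strip_edge_in f b u = true.

Lemma cut_start_iff f b r r' s : finite_set f -> strip_cut f b r r' ->
  strip_edge_in f b s = true -> (cut_start f b s = r <-> r < s < r').
Proof.
  intros Hfin (Hrr' & Hr & Hr' & Hin) Hs.
  destruct (cut_start_spec f b s Hfin) as (H1 & H2 & H3). split.
  - intros <-. split; auto. destruct (Z_lt_ge_dec s r') as [|Hge]; auto.
    destruct (Z.eq_dec s r') as [->|]; [congruence|].
    rewrite H3 in Hr'; [discriminate|lia].
  - intros Hs'. destruct (Z.lt_total (cut_start f b s) r) as [Hlt|[Heq|Hgt]]; auto.
    + rewrite H3 in Hr; [discriminate|lia].
    + rewrite Hin in H2; [discriminate|lia].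
Qed.

Definition zz_dec : forall g h : Z * Z, {g = h} + {g <> h}.
Proof. decide equality; apply Z.eq_dec. Defined.

Definition edge_cuts f (p q : node) : list (Z * Z) :=
  match strip_crossing p q with Some (b, s) => [(b, cut_start f b s)] | None => [] end.

Fixpoint strip_cuts f (x : node) (l : list node) : list (Z * Z) :=
  match l with [] => [] | y :: l' => edge_cuts f x y ++ strip_cuts f y l' end.

Lemma strip_cuts_app f x l1 l2 :
  strip_cuts f x (l1 ++ l2) = strip_cuts f x l1 ++ strip_cuts f (last l1 x) l2.
Proof.
  revert x; induction l1 as [|y l1 IH]; intros x; [reflexivity|].
  cbn [app strip_cuts]. rewrite IH, app_assoc, last_cons; auto.
Qed.

Lemma in_strip_cuts f P g l x y : gpath P x l y -> In g (strip_cuts f x l) ->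
  exists l1 q1 q0 l2, l = l1 ++ q0 :: l2 /\ gpath P x l1 q1 /\ tri_adj q1 q0 /\
    gpath P q0 l2 y /\ In g (edge_cuts f q1 q0).
Proof.
  intros G; induction G as [|x y1 l y Hx Hxy G IH]; intros Hg; [contradiction|].
  apply in_app_or in Hg as [Hg|Hg].
  - exists [], x, y1, l. repeat split; auto. constructor; auto.
  - destruct (IH Hg) as (l1 & q1 & q0 & l2 & -> & G1 & A & G2 & Hi).
    exists (y1 :: l1), q1, q0, l2. repeat split; auto. constructor; auto.
Qed.

Lemma strip_crossings_dist b s s' x y q1 q0 :
  (lower_end b s x /\ upper_end b s y) \/ (upper_end b s x /\ lower_end b s y) ->
  (lower_end b s' q1 /\ upper_end b s' q0) \/ (upper_end b s' q1 /\ lower_end b s' q0) ->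
  tri_dist x q0 <= tri_dist y q1 + 1.
Proof.
  destruct x, y, q1, q0; unfold lower_end, upper_end, tri_dist; cbn [fst snd]; lia.
Qed.

(* A walk x, y, ..., q1, q0 has length at least tri_dist y q1 + 2. *)
Lemma same_cut_shortcut f x y q1 q0 b s s' :
  finite_set f -> f x = true -> f y = true -> f q1 = true -> f q0 = true ->
  tri_adj x y -> strip_crossing x y = Some (b, s) ->
  tri_adj q1 q0 -> strip_crossing q1 q0 = Some (b, s') ->
  cut_start f b s = cut_start f b s' ->
  exists L, gpath (fun z => f z = true) x L q0 /\ Z.of_nat (length L) <= tri_dist y q1 + 1.
Proof.
  intros Hfin Hx Hy Hq1 Hq0 Hxy Cs Hq Cs' Heq.
  pose proof (strip_edge_in_crossing f x y b s Hx Hy Hxy Cs) as Es.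
  pose proof (strip_edge_in_crossing f q1 q0 b s' Hq1 Hq0 Hq Cs') as Es'.
  destruct (cut_start_spec f b s Hfin) as (S1 & S2 & S3).
  destruct (cut_start_spec f b s' Hfin) as (T1 & T2 & T3). rewrite <- Heq in T1, T3.
  assert (Hrun : forall u, Z.min s s' <= u <= Z.max s s' -> strip_edge_in f b u = true).
  { intros u Hu. destruct (Z.eq_dec u s) as [->|]; auto.
    destruct (Z.eq_dec u s') as [->|]; auto.
    destruct (Z_lt_ge_dec u s); [apply S3|apply T3]; lia. }
  pose proof (strip_crossing_ends _ _ _ _ Hxy Cs) as Xs.
  pose proof (strip_crossing_ends _ _ _ _ Hq Cs') as Xs'.
  destruct (strip_run_path f b s s' x q0 Hrun) as (L & GL & HL);
    [unfold strip_end; tauto|unfold strip_end; tauto|].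
  pose proof (strip_crossings_dist b s s' x y q1 q0 Xs Xs').
  exists L. split; auto. lia.
Qed.

Lemma shortest_strip_cuts_le1 f x l y g : finite_set f ->
  shortest_path (fun z => f z = true) x l y -> (count_occ zz_dec (strip_cuts f x l) g <= 1)%nat.
Proof.
  intros Hfin; revert x; induction l as [|y1 l IH]; intros x Hs; [simpl; lia|].
  cbn [strip_cuts]. rewrite count_occ_app.
  pose proof (IH y1 (shortest_path_tail _ _ _ _ _ Hs)) as Htail.
  assert (Hhead : (count_occ zz_dec (edge_cuts f x y1) g <= 1)%nat).
  { pose proof (count_occ_bound zz_dec g (edge_cuts f x y1)).
    unfold edge_cuts in *. destruct strip_crossing as [[? ?]|]; simpl in *; lia. }
  destruct (in_dec zz_dec g (edge_cuts f x y1)) as [Hin1|Hout];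
    [|rewrite (proj1 (count_occ_not_In _ _ _) Hout); lia].
  destruct (in_dec zz_dec g (strip_cuts f y1 l)) as [Hin2|Hout];
    [|rewrite (proj1 (count_occ_not_In _ _ _) Hout); lia].
  exfalso. destruct Hs as [G Hmin]. inversion G as [|? ? ? ? Hx Hxy1 Gy1]; subst.
  destruct (in_strip_cuts f _ g l y1 y Gy1 Hin2) as (l1 & q1 & q0 & l2 & -> & G1 & A & G2 & Hi).
  unfold edge_cuts in Hin1, Hi.
  destruct (strip_crossing x y1) as [[b s]|] eqn:Cs; [|contradiction].
  destruct (strip_crossing q1 q0) as [[b' s']|] eqn:Cs'; [|contradiction].
  destruct Hin1 as [<-|[]]. destruct Hi as [Hi|[]]. injection Hi as -> Heq.
  destruct (gpath_ends _ _ _ _ G1) as [Hy1 Hq1]. destruct (gpath_ends _ _ _ _ G2) as [Hq0 _].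
  destruct (same_cut_shortcut f x y1 q1 q0 b s s' Hfin Hx Hy1 Hq1 Hq0 Hxy1 Cs A Cs' (eq_sym Heq))
    as (L & GL & HL).
  pose proof (tri_dist_le_length _ _ _ _ G1).
  specialize (Hmin (L ++ l2) (gpath_app _ _ _ _ _ _ GL G2)).
  rewrite length_app in Hmin; cbn [length] in Hmin; rewrite length_app in Hmin.
  cbn [length] in Hmin. lia.
Qed.

Fixpoint edge_sum (h : node -> node -> Z) (x : node) (l : list node) : Z :=
  match l with [] => 0 | y :: l' => h x y + edge_sum h y l' end.

Lemma edge_sum_ext (f : node -> bool) h1 h2 x l y : gpath (fun z => f z = true) x l y ->
  (forall p q, f p = true -> f q = true -> tri_adj p q -> h1 p q = h2 p q) ->
  edge_sum h1 x l = edge_sum h2 x l.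
Proof.
  intros G Hh; induction G as [|x y l z Hx Hxy G IH]; cbn [edge_sum]; auto.
  rewrite IH, Hh; auto. apply (gpath_ends _ _ _ _ G).
Qed.

Lemma edge_sum_add h1 h2 x l :
  edge_sum (fun p q => h1 p q + h2 p q) x l = edge_sum h1 x l + edge_sum h2 x l.
Proof. revert x; induction l as [|y l IH]; intros x; cbn [edge_sum]; [|rewrite IH]; lia. Qed.

Lemma edge_sum_sub h1 h2 x l :
  edge_sum (fun p q => h1 p q - h2 p q) x l = edge_sum h1 x l - edge_sum h2 x l.
Proof. revert x; induction l as [|y l IH]; intros x; cbn [edge_sum]; [|rewrite IH]; lia. Qed.

Lemma edge_sum_scale c h x l :
  edge_sum (fun p q => c * h p q) x l = c * edge_sum h x l.
Proof. revert x; induction l as [|y l IH]; intros x; cbn [edge_sum]; [|rewrite IH]; lia. Qed.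

Lemma edge_sum_telescope (g : node -> Z) x l :
  edge_sum (fun p q => g q - g p) x l = g (last l x) - g x.
Proof.
  revert x; induction l as [|y l IH]; intros x; cbn [edge_sum]; [simpl; lia|].
  rewrite IH, last_cons. lia.
Qed.

(* Signed crossing (+1 upwards, -1 downwards) of the ray formed by the edges of strip b
   at positions >= j. *)
Definition ray_crossing (b j : Z) (p q : node) : Z :=
  match strip_crossing p q with
  | Some (b', s) => if andb (b' =? b) (j <=? s) then (if snd q =? snd p + 1 then 1 else -1) else 0
  | None => 0
  end.

Definition row_right (b a : Z) (z : node) : Z := if andb (snd z =? b) (a <? fst z) then 1 else 0.

Lemma ray_crossing_shift (f : node -> bool) b j p q m :
  f p = true -> f q = true -> tri_adj p q -> f m = false -> strip_end b j m ->
  ray_crossing b j p q = ray_crossing b (j + 1) p q.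
Proof.
  destruct p as [p1 p2], q as [q1 q2], m as [m1 m2]. intros Fp Fq Hpq Fm Hm.
  unfold ray_crossing, strip_crossing, strip_end, lower_end, upper_end in *; cbn [fst snd] in *.
  destruct_adj Hpq; destruct_Zcmp; try lia;
  destruct Hm as [[? ?]|[? ?]]; try lia;
  first [ assert (E : (p1, p2) = (m1, m2)) by (f_equal; lia); congruence
        | assert (E : (q1, q2) = (m1, m2)) by (f_equal; lia); congruence ].
Qed.

(* Both rays run to the right of the node (a, b) outside the set, in the strips above
   and below row b; only edges entering or leaving row b to the right of a cross one
   of them without the other. *)
Lemma ray_crossing_turn (f : node -> bool) b a p q :
  f p = true -> f q = true -> tri_adj p q -> f (a, b) = false ->
  row_right b a q - row_right b a p = ray_crossing (b - 1) (2 * a + 2) p q - ray_crossing b (2 * a + 1) p q.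
Proof.
  destruct p as [p1 p2], q as [q1 q2]. intros Fp Fq Hpq Fm.
  unfold ray_crossing, strip_crossing, row_right in *; cbn [fst snd] in *.
  destruct_adj Hpq; destruct_Zcmp; try lia;
  first [ assert (E : (p1, p2) = (a, b)) by (f_equal; lia); congruence
        | assert (E : (q1, q2) = (a, b)) by (f_equal; lia); congruence ].
Qed.

Definition winding (x : node) (l : list node) (m : node) : Z :=
  edge_sum (ray_crossing (snd m) (2 * fst m)) x l.

(* The rays starting at an edge through m or at the edge right after one; for a node m
   outside the set they all give the winding number around m. *)
Definition near_ray (m : node) (b j : Z) : Prop :=
  (b = snd m /\ 2 * fst m - 1 <= j <= 2 * fst m + 1) \/
  (b = snd m - 1 /\ 2 * fst m <= j <= 2 * fst m + 2).

Lemma ray_sum_shift f x l b j m : gpath (fun z => f z = true) x l x -> f m = false ->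
  strip_end b j m -> edge_sum (ray_crossing b j) x l = edge_sum (ray_crossing b (j + 1)) x l.
Proof.
  intros G Fm Hm. apply (edge_sum_ext f _ _ _ _ _ G).
  intros p q Fp Fq Hpq. exact (ray_crossing_shift f b j p q m Fp Fq Hpq Fm Hm).
Qed.

Lemma winding_near_ray f x l m b j : gpath (fun z => f z = true) x l x -> f m = false ->
  near_ray m b j -> edge_sum (ray_crossing b j) x l = winding x l m.
Proof.
  intros G Fm Hnear. destruct m as [a b0]. unfold winding, near_ray in *; cbn [fst snd] in *.
  assert (e1 : edge_sum (ray_crossing b0 (2 * a - 1)) x l = edge_sum (ray_crossing b0 (2 * a)) x l).
  { replace (2 * a) with (2 * a - 1 + 1) at 2 by lia. apply (ray_sum_shift f _ _ _ _ _ G Fm).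
    left; unfold lower_end; cbn [fst snd]; lia. }
  assert (e2 : edge_sum (ray_crossing b0 (2 * a)) x l = edge_sum (ray_crossing b0 (2 * a + 1)) x l).
  { apply (ray_sum_shift f _ _ _ _ _ G Fm). left; unfold lower_end; cbn [fst snd]; lia. }
  assert (e3 : edge_sum (ray_crossing (b0 - 1) (2 * a)) x l =
               edge_sum (ray_crossing (b0 - 1) (2 * a + 1)) x l).
  { apply (ray_sum_shift f _ _ _ _ _ G Fm). right; unfold upper_end; cbn [fst snd]; lia. }
  assert (e4 : edge_sum (ray_crossing (b0 - 1) (2 * a + 1)) x l =
               edge_sum (ray_crossing (b0 - 1) (2 * a + 2)) x l).
  { replace (2 * a + 2) with (2 * a + 1 + 1) by lia. apply (ray_sum_shift f _ _ _ _ _ G Fm).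
    right; unfold upper_end; cbn [fst snd]; lia. }
  assert (e5 : edge_sum (ray_crossing b0 (2 * a + 1)) x l =
               edge_sum (ray_crossing (b0 - 1) (2 * a + 2)) x l).
  { pose proof (edge_sum_telescope (row_right b0 a) x l) as T.
    rewrite (gpath_last _ _ _ _ G), Z.sub_diag in T.
    rewrite (edge_sum_ext f _ (fun p q => ray_crossing (b0 - 1) (2 * a + 2) p q -
                                          ray_crossing b0 (2 * a + 1) p q) x l x G) in T.
    - rewrite edge_sum_sub in T. lia.
    - intros p q Fp Fq Hpq. exact (ray_crossing_turn f b0 a p q Fp Fq Hpq Fm). }
  destruct Hnear as [[-> Hj]|[-> Hj]].
  - assert (j = 2 * a - 1 \/ j = 2 * a \/ j = 2 * a + 1) as [-> | [-> | ->]] by lia; congruence.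
  - assert (j = 2 * a \/ j = 2 * a + 1 \/ j = 2 * a + 2) as [-> | [-> | ->]] by lia; congruence.
Qed.

Lemma winding_adj f x l m m' : gpath (fun z => f z = true) x l x ->
  f m = false -> f m' = false -> tri_adj m m' -> winding x l m = winding x l m'.
Proof.
  intros G Fm Fm' Hmm'.
  assert (exists b j, near_ray m b j /\ near_ray m' b j) as (b & j & N & N').
  { destruct m as [a b], m' as [a' b']. unfold near_ray; cbn [fst snd]. destruct_adj Hmm'.
    - exists b, (2 * a + 1). lia.
    - exists b, (2 * a - 1). lia.
    - exists b, (2 * a). lia.
    - exists (b - 1), (2 * a). lia.
    - exists (b - 1), (2 * a + 1). lia.
    - exists b, (2 * a - 1). lia. }
  rewrite <- (winding_near_ray f x l m b j), <- (winding_near_ray f x l m' b j); auto.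
Qed.

Lemma winding_complement_path f x l m l' m' : gpath (fun z => f z = true) x l x ->
  gpath (fun z => f z = false) m l' m' -> winding x l m = winding x l m'.
Proof.
  intros G G'; induction G' as [|m m1 l' m' Fm Hmm1 G' IH]; auto.
  rewrite <- IH. apply (winding_adj f); auto. apply (gpath_ends _ _ _ _ G').
Qed.

Lemma strip_edge_out_near f b r : strip_edge_in f b r = false ->
  exists m, f m = false /\ near_ray m b (r + 1) /\ near_ray m b r.
Proof.
  intros H. destruct (strip_edge_out f b r H) as (m & Fm & Hm). exists m; split; auto.
  unfold near_ray, strip_end, lower_end, upper_end in *. lia.
Qed.

Definition down_crossing (b lo hi : Z) (p q : node) : Z :=
  match strip_crossing p q with
  | Some (b', s) =>
      if andb (andb (b' =? b) (lo <=? s)) (andb (s <? hi) (snd p =? snd q + 1)) then 1 else 0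
  | None => 0
  end.

(* An edge crosses the cut (b, r) iff it crosses the ray from r + 1 but not the one from
   r'; a downward crossing counts -1 on the rays, hence the correction term. *)
Lemma edge_cuts_count f b r r' p q : finite_set f -> strip_cut f b r r' ->
  f p = true -> f q = true -> tri_adj p q ->
  Z.of_nat (count_occ zz_dec (edge_cuts f p q) (b, r)) =
  ray_crossing b (r + 1) p q - ray_crossing b r' p q + 2 * down_crossing b (r + 1) r' p q.
Proof.
  intros Hfin Hcut Fp Fq Hpq. pose proof (proj1 Hcut) as Hrr'.
  unfold edge_cuts, ray_crossing, down_crossing.
  destruct (strip_crossing p q) as [[b' s]|] eqn:Cs; [|reflexivity].
  pose proof (strip_edge_in_crossing f p q b' s Fp Fq Hpq Cs) as Es.
  destruct (strip_crossing_spec _ _ _ _ Cs) as [Hdir Hs].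
  cbn [count_occ]. destruct (zz_dec (b', cut_start f b' s) (b, r)) as [Heq|Hne].
  - injection Heq as -> Heq.
    apply (cut_start_iff f b r r' s Hfin Hcut Es) in Heq. destruct_Zcmp; lia.
  - destruct (Z.eq_dec b' b) as [->|Hb]; [|destruct_Zcmp; lia].
    assert (~ (r < s < r')).
    { intros Hin. apply Hne. f_equal. apply (proj2 (cut_start_iff f b r r' s Hfin Hcut Es) Hin). }
    destruct_Zcmp; lia.
Qed.

Lemma count_strip_cuts f g x l : Z.of_nat (count_occ zz_dec (strip_cuts f x l) g) =
  edge_sum (fun p q => Z.of_nat (count_occ zz_dec (edge_cuts f p q) g)) x l.
Proof.
  revert x; induction l as [|y l IH]; intros x; cbn [strip_cuts edge_sum]; auto.
  rewrite count_occ_app, <- IH. lia.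
Qed.

Definition complement_connected (f : node -> bool) := forall m m', f m = false -> f m' = false ->
  exists l, gpath (fun z => f z = false) m l m'.

(* The two rays bounding the cut start next to the nodes outside the set at its two ends;
   these are joined outside the set, so both rays carry the same winding number. *)
Lemma closed_walk_strip_cut_even f b r r' x l :
  finite_set f -> complement_connected f -> strip_cut f b r r' ->
  gpath (fun z => f z = true) x l x -> Nat.Even (count_occ zz_dec (strip_cuts f x l) (b, r)).
Proof.
  intros Hfin Hcc Hcut G. pose proof Hcut as (_ & Hr & Hr' & _).
  assert (Hsum : Z.of_nat (count_occ zz_dec (strip_cuts f x l) (b, r)) =
                 edge_sum (ray_crossing b (r + 1)) x l - edge_sum (ray_crossing b r') x l +
                 2 * edge_sum (down_crossing b (r + 1) r') x l).
  { rewrite count_strip_cuts, <- edge_sum_scale, <- edge_sum_sub, <- edge_sum_add.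
    apply (edge_sum_ext f _ _ _ _ _ G). intros p q Fp Fq Hpq.
    exact (edge_cuts_count f b r r' p q Hfin Hcut Fp Fq Hpq). }
  destruct (strip_edge_out_near f b r Hr) as (mL & FL & NL & _).
  destruct (strip_edge_out_near f b r' Hr') as (mR & FR & _ & NR).
  rewrite (winding_near_ray f x l mL b (r + 1)), (winding_near_ray f x l mR b r') in Hsum; auto.
  destruct (Hcc mL mR FL FR) as [lc Gc].
  rewrite (winding_complement_path f x l mL lc mR G Gc), Z.sub_diag in Hsum.
  exists (Z.to_nat (edge_sum (down_crossing b (r + 1) r') x l)). lia.
Qed.

Lemma strip_cut_of_edge f b s : finite_set f -> strip_edge_in f b s = true ->
  exists r', strip_cut f b (cut_start f b s) r'.
Proof.
  intros Hfin Es. destruct (cut_start_spec f b s Hfin) as (H1 & H2 & H3).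
  destruct (strip_edge_far f Hfin) as [M HM].
  destruct (false_gap_above (strip_edge_in f b) M (HM b) s) as (r' & R1 & R2 & R3).
  exists r'. repeat split; auto; [lia|]. intros u Hu.
  destruct (Z_lt_ge_dec u s); [apply H3; lia|].
  destruct (Z.eq_dec u s) as [->|]; auto. apply R3; lia.
Qed.

Lemma closed_walk_strip_cuts_even f x l g :
  finite_set f -> complement_connected f ->
  gpath (fun z => f z = true) x l x -> Nat.Even (count_occ zz_dec (strip_cuts f x l) g).
Proof.
  intros Hfin Hcc G.
  destruct (in_dec zz_dec g (strip_cuts f x l)) as [Hin|Hout];
    [|rewrite (proj1 (count_occ_not_In _ _ _) Hout); exists 0%nat; reflexivity].
  destruct (in_strip_cuts f _ g l x x G Hin) as (l1 & q1 & q0 & l2 & _ & G1 & Hq & G2 & Hi).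
  destruct (gpath_ends _ _ _ _ G1) as [_ Fq1]. destruct (gpath_ends _ _ _ _ G2) as [Fq0 _].
  unfold edge_cuts in Hi. destruct (strip_crossing q1 q0) as [[b s]|] eqn:Cs; [|contradiction].
  destruct Hi as [<-|[]].
  destruct (strip_cut_of_edge f b s Hfin (strip_edge_in_crossing f q1 q0 b s Fq1 Fq0 Hq Cs))
    as [r' Hcut].
  exact (closed_walk_strip_cut_even f b _ r' x l Hfin Hcc Hcut G).
Qed.

Definition rot (p : node) : node := (- snd p, fst p + snd p).
Definition rot_inv (p : node) : node := (fst p + snd p, - fst p).

Lemma rotK z : rot_inv (rot z) = z.
Proof. destruct z; unfold rot, rot_inv; cbn [fst snd]; f_equal; lia. Qed.
Lemma rot_invK z : rot (rot_inv z) = z.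
Proof. destruct z; unfold rot, rot_inv; cbn [fst snd]; f_equal; lia. Qed.
Lemma rot_adj p q : tri_adj p q -> tri_adj (rot p) (rot q).
Proof. destruct p, q; unfold rot, tri_adj; cbn [fst snd]; lia. Qed.
Lemma rot_inv_adj p q : tri_adj p q -> tri_adj (rot_inv p) (rot_inv q).
Proof. destruct p, q; unfold rot_inv, tri_adj; cbn [fst snd]; lia. Qed.

Definition rotn (k : nat) : node -> node := Nat.iter k rot.
Definition rotn_inv (k : nat) : node -> node := Nat.iter k rot_inv.

Lemma rotnK k z : rotn_inv k (rotn k z) = z.
Proof.
  revert z; induction k as [|k IH]; intros z; [reflexivity|].
  unfold rotn, rotn_inv in *. rewrite Nat.iter_succ_r, Nat.iter_succ, rotK. apply IH.
Qed.
Lemma rotn_invK k z : rotn k (rotn_inv k z) = z.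
Proof.
  revert z; induction k as [|k IH]; intros z; [reflexivity|].
  unfold rotn, rotn_inv in *. rewrite Nat.iter_succ_r, Nat.iter_succ, rot_invK. apply IH.
Qed.
Lemma rotn_adj k p q : tri_adj p q -> tri_adj (rotn k p) (rotn k q).
Proof. induction k; simpl; auto using rot_adj. Qed.
Lemma rotn_inv_adj k p q : tri_adj p q -> tri_adj (rotn_inv k p) (rotn_inv k q).
Proof. induction k; simpl; auto using rot_inv_adj. Qed.

Section Transport.

Variables h h_inv : node -> node.
Hypothesis hK : forall z, h_inv (h z) = z.
Hypothesis h_invK : forall z, h (h_inv z) = z.
Hypothesis h_adj : forall p q, tri_adj p q -> tri_adj (h p) (h q).
Hypothesis h_inv_adj : forall p q, tri_adj p q -> tri_adj (h_inv p) (h_inv q).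
Variable f : node -> bool.

Lemma gpath_transport x l y : gpath (fun z => f z = true) x l y ->
  gpath (fun z => f (h_inv z) = true) (h x) (map h l) (h y).
Proof. apply gpath_map; auto. intros z; rewrite hK; auto. Qed.

Lemma shortest_path_transport x l y : shortest_path (fun z => f z = true) x l y ->
  shortest_path (fun z => f (h_inv z) = true) (h x) (map h l) (h y).
Proof.
  intros [G Hmin]. split; [apply gpath_transport; auto|].
  intros l' G'. rewrite length_map, <- (length_map h_inv l'). apply Hmin.
  rewrite <- (hK x), <- (hK y). exact (gpath_map h_inv _ _ _ _ _ h_inv_adj (fun z Hz => Hz) G').
Qed.

Lemma finite_set_transport : finite_set f -> finite_set (fun z => f (h_inv z)).
Proof.
  intros [vs Hvs]. exists (map h vs). intros z Hz.
  rewrite <- (h_invK z). apply in_map, Hvs, Hz.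
Qed.

Lemma complement_connected_transport :
  complement_connected f -> complement_connected (fun z => f (h_inv z)).
Proof.
  intros Hcc m m' Fm Fm'. destruct (Hcc _ _ Fm Fm') as [l G]. exists (map h l).
  rewrite <- (h_invK m), <- (h_invK m').
  apply (gpath_map h _ _ _ _ _ h_adj) with (2 := G). intros z; rewrite hK; auto.
Qed.

End Transport.

(* Rotating by 0, 60 and 120 degrees turns the three families of lines of the grid into
   the horizontal one; each edge crosses exactly two of them. *)
Definition dir_cuts f (k : nat) x l : list (Z * Z) :=
  strip_cuts (fun z => f (rotn_inv k z)) (rotn k x) (map (rotn k) l).

Definition grid_cuts f x l : list (nat * (Z * Z)) :=
  flat_map (fun k => map (pair k) (dir_cuts f k x l)) [0; 1; 2]%nat.

Definition cut_dec : forall c d : nat * (Z * Z), {c = d} + {c <> d}.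
Proof. decide equality; [apply zz_dec|apply Nat.eq_dec]. Defined.

Lemma count_occ_map_pair k k' L g :
  count_occ cut_dec (map (pair k) L) (k', g) = if Nat.eqb k k' then count_occ zz_dec L g else 0%nat.
Proof.
  induction L as [|a L IH]; cbn [map count_occ]; [destruct Nat.eqb; auto|].
  rewrite IH. destruct (Nat.eqb_spec k k') as [<-|Hk].
  - destruct (cut_dec (k, a) (k, g)) as [E|E], (zz_dec a g) as [E'|E'];
      congruence.
  - destruct (cut_dec (k, a) (k', g)) as [E|E]; congruence.
Qed.

Lemma count_grid_cuts f x l k g : count_occ cut_dec (grid_cuts f x l) (k, g) =
  if (k <? 3)%nat then count_occ zz_dec (dir_cuts f k x l) g else 0%nat.
Proof.
  unfold grid_cuts. cbn [flat_map]. rewrite app_nil_r, !count_occ_app, !count_occ_map_pair.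
  destruct k as [|[|[|k]]]; simpl; lia.
Qed.

Lemma last_map (h : node -> node) l x : last (map h l) (h x) = h (last l x).
Proof.
  revert x; induction l as [|y l IH]; intros x; [reflexivity|].
  cbn [map]. rewrite !last_cons. apply IH.
Qed.

Lemma grid_cuts_app f x l1 m l2 c : gpath (fun z => f z = true) x l1 m ->
  count_occ cut_dec (grid_cuts f x (l1 ++ l2)) c =
  (count_occ cut_dec (grid_cuts f x l1) c + count_occ cut_dec (grid_cuts f m l2) c)%nat.
Proof.
  intros G. destruct c as [k g]. rewrite !count_grid_cuts.
  destruct (k <? 3)%nat; [|reflexivity].
  unfold dir_cuts. rewrite map_app, strip_cuts_app, last_map, (gpath_last _ _ _ _ G).
  apply count_occ_app.
Qed.

Definition crosses_strip (p q : node) : nat :=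
  match strip_crossing p q with Some _ => 1%nat | None => 0%nat end.

Lemma crosses_two_strips p q : tri_adj p q ->
  (crosses_strip (rotn 0 p) (rotn 0 q) + crosses_strip (rotn 1 p) (rotn 1 q) +
   crosses_strip (rotn 2 p) (rotn 2 q) = 2)%nat.
Proof.
  destruct p, q; intros H; unfold crosses_strip, strip_crossing, rotn; simpl Nat.iter; unfold rot; cbn [fst snd].
  destruct_adj H; destruct_Zcmp; lia.
Qed.

Lemma grid_cuts_length f x l y : gpath (fun z => f z = true) x l y ->
  length (grid_cuts f x l) = (2 * length l)%nat.
Proof.
  intros G; induction G as [|x y l z _ Hxy _ IH]; [reflexivity|].
  assert (Hedge : forall f' p q, length (edge_cuts f' p q) = crosses_strip p q).
  { intros f' p q; unfold edge_cuts, crosses_strip. destruct strip_crossing as [[? ?]|]; auto. }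
  unfold grid_cuts, dir_cuts in *; cbn [flat_map map strip_cuts] in *.
  rewrite !length_app, !length_map, !length_app, !Hedge in *.
  pose proof (crosses_two_strips x y Hxy). cbn [length] in *. lia.
Qed.

Lemma shortest_grid_cuts_le1 f x l y c : finite_set f ->
  shortest_path (fun z => f z = true) x l y -> (count_occ cut_dec (grid_cuts f x l) c <= 1)%nat.
Proof.
  intros Hfin Hs. destruct c as [k g]. rewrite count_grid_cuts.
  destruct (k <? 3)%nat; [|lia].
  apply shortest_strip_cuts_le1 with (y := rotn k y).
  - apply finite_set_transport with (h := rotn k); auto using rotn_invK.
  - apply shortest_path_transport; auto using rotnK, rotn_invK, rotn_adj, rotn_inv_adj.
Qed.

Lemma closed_walk_grid_cuts_even f x l c : finite_set f -> complement_connected f ->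
  gpath (fun z => f z = true) x l x -> Nat.Even (count_occ cut_dec (grid_cuts f x l) c).
Proof.
  intros Hfin Hcc G. destruct c as [k g]. rewrite count_grid_cuts.
  destruct (k <? 3)%nat; [|exists 0%nat; reflexivity].
  apply closed_walk_strip_cuts_even.
  - apply finite_set_transport with (h := rotn k); auto using rotn_invK.
  - apply complement_connected_transport with (h := rotn k); auto using rotnK, rotn_invK, rotn_adj.
  - apply gpath_transport; auto using rotnK, rotn_adj.
Qed.

Definition node_dec : forall x y : node, {x = y} + {x <> y}.
Proof. decide equality; apply Z.eq_dec. Defined.

Definition memb (vs : list node) (z : node) : bool := if in_dec node_dec z vs then true else false.

Lemma memb_true vs z : memb vs z = true <-> In z vs.
Proof. unfold memb; destruct in_dec; split; auto; discriminate. Qed.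

Lemma memb_false vs z : memb vs z = false <-> ~ In z vs.
Proof. unfold memb; destruct in_dec; split; auto; try discriminate; tauto. Qed.

Lemma gpath_memb vs x l y : gpath (fun z => In z vs) x l y -> gpath (fun z => memb vs z = true) x l y.
Proof. apply gpath_mono. intros z; apply memb_true. Qed.

Theorem mainTheorem1 (vs : list node) (u v : node) :
  tri_grid_graph vs -> simple_grid vs -> In u vs -> In v vs ->
  forall x y, on_shortest vs u v x -> on_shortest vs u v y ->
  forall l, shortest_path (fun z => In z vs) x l y ->
  forall z, In z (x :: l) -> on_shortest vs u v z.
Proof.
  intros Hconn Hsimple _ _ x y [A [SA HxA]] [B [SB HyB]] l Sl z Hz.
  assert (Hfin : finite_set (memb vs)) by (exists vs; intros w; apply memb_true).
  assert (Hcc : complement_connected (memb vs)).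
  { intros m m' Fm Fm'. apply memb_false in Fm, Fm'. destruct (Hsimple m m' Fm Fm') as [lc Gc].
    exists lc. apply (gpath_mono _ _ _ _ _ (fun w => proj2 (memb_false vs w)) Gc). }
  apply (shortest_interval_convex _ Hconn _ cut_dec (grid_cuts (memb vs)) 2)
    with (x := x) (y := y) (A := A) (B := B) (l := l); auto.
  - intros x' l1 m l2 c G. apply grid_cuts_app, gpath_memb, G.
  - intros x' l' y' G. apply (grid_cuts_length _ _ _ y'), gpath_memb, G.
  - intros x' l' y' c S. apply (shortest_grid_cuts_le1 _ _ _ y' _ Hfin).
    apply (shortest_path_ext (fun z => In z vs)); auto. intros w; symmetry; apply memb_true.
  - intros x' l' c G. apply closed_walk_grid_cuts_even, gpath_memb; auto.
Qed.
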